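(* Let $k$ be a positive integer and $S=K[x_1,\ldots,x_n]$. Then: if $n=4k$, $V(n,2)=\bigcup_{0\le i\le\sqrt k}W_{2k-i}$; if $n=4k+1$ with $k\neq 1$, $V(n,2)=\bigcup_{0\le i\le(\sqrt{1+4k}-1)/2}W_{2k-i}$; if $n=5$, $V(5,2)=W_2\cup C_5$; and if $n=4k+2$ or $n=4k+3$, $V(n,2)=\emptyset$. (Here $i$ ranges over integers.)
   Context: $K$ is a field; $G(I)$ is the minimal monomial generating set of a monomial ideal $I$. With $\sigma$ the bijection $x_{i_1}\cdots x_{i_k}\mapsto\{i_1,\ldots,i_k\}$, the facet complex $\delta_{\mathcal{F}}(I)$ has facets $\sigma(g)$, $g\in G(I)$, the Stanley–Reisner complex is $\delta_{\mathcal{N}}(I)=\{\sigma(g)\mid g\text{ square-free monomial},\ g\notin I\}$, and a square-free monomial ideal $I$ is an $f$-ideal if both have the same $f$-vector. $V(n,2)$ is the set of $f$-ideals of $S$ all of whose minimal generators have degree 2. For a nonempty proper $B\subset[n]$ with complement $\overline B$, $W_B=\{x_ix_j\mid i\ne j,\ i,j\in B\text{ or } i,j\in\overline B\}$; such an $f$-ideal $I$ is of $l$ type if $W_B\subseteq G(I)$ for some $B$ with $|B|=l$, and $W_l$ is the set of $f$-ideals of $S$ of $l$ type. For $n=5$, $C_5$ denotes the set of ideals of $K[x_1,\ldots,x_5]$ generated by $\{x_ix_j\mid v_iv_j\in E(T)\}$ where $T$ ranges over the cycles of length 5 on the vertex set $\{v_1,\ldots,v_5\}$ (for example $\langle x_1x_2,x_2x_3,x_3x_4,x_4x_5,x_1x_5\rangle$).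 *)

From mathcomp Require Import all_boot all_order all_fingroup.
Set Implicit Arguments. Unset Strict Implicit. Unset Printing Implicit Defensive.

(* Square-free monomials of S = K[x_1,...,x_n] are identified, via sigma,
   with subsets of [n] = 'I_n.  A square-free monomial ideal I of S is
   represented by the family of square-free monomials it contains
   (a family of subsets of 'I_n closed upwards); such an ideal is
   determined by this family (it is generated by it). *)

Section Defs.
Variable n : nat.
Implicit Types (F G : {set {set 'I_n}}) (A B : {set 'I_n}).

Definition sqf_ideal F : Prop :=
  forall A B, A \in F -> A \subset B -> B \in F.

Definition gen_ideal G : {set {set 'I_n}} :=
  [set A : {set 'I_n} | [exists g in G, g \subset A]].

Definition mingens F : {set {set 'I_n}} :=
  [set A in F | [forall B in F, (B \subset A) ==> (B == A)]].

Definition facet_complex F : {set {set 'I_n}} :=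
  [set A : {set 'I_n} | [exists g in mingens F, A \subset g]].

Definition SR_complex F : {set {set 'I_n}} := [set A : {set 'I_n} | A \notin F].

(* f_i = number of faces of dimension i, i.e. of cardinality i+1 *)
Definition fvec (D : {set {set 'I_n}}) (i : nat) : nat :=
  #|[set A in D | #|A| == i.+1]|.

Definition f_ideal F : Prop :=
  sqf_ideal F /\ forall i, fvec (facet_complex F) i = fvec (SR_complex F) i.

Definition Vn2 F : Prop :=
  f_ideal F /\ forall g, g \in mingens F -> #|g| = 2.

Definition WB B : {set {set 'I_n}} :=
  [set A : {set 'I_n} | [exists i : 'I_n, exists j : 'I_n, (i != j) &&
     (((i \in B) && (j \in B)) || ((i \notin B) && (j \notin B))) &&
     (A == [set i; j])]].

Definition Wl (l : nat) F : Prop :=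
  Vn2 F /\ exists B, [/\ 0 < #|B| < n, #|B| = l & WB B \subset mingens F].

End Defs.

(* C_5: ideals generated by the edges of a 5-cycle on {v_1,...,v_5};
   a 5-cycle is given by a cyclic ordering p 0, p 1, ..., p 4 of the vertices *)
Definition C5 (F : {set {set 'I_5}}) : Prop :=
  exists p : {perm 'I_5},
    F = gen_ideal [set [set p i; p (ordS i)] | i : 'I_5].

From mathcomp Require Import all_boot all_order all_fingroup.
From mathcomp Require Import zify.
Set Implicit Arguments. Unset Strict Implicit. Unset Printing Implicit Defensive.

(* For F in V(n,2), equality of f_2 puts every 3-set into F, so the graph of the
   pairs missing from F is triangle-free, and equality of f_1 says that it has
   half of the C(n,2) pairs as edges.  If some edge uv has deg u + deg v >= n,
   then N u and N v partition the vertices and every missing pair joins N v to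
   its complement B: F is of |B| type, and counting edges gives
   (n - 2|B|)^2 <= n.  Otherwise Cauchy-Schwarz forces the graph to be
   (n-1)/2-regular, which for a triangle-free graph is only possible when n <= 5;
   for n = 5 the pairs in F then form a 5-cycle.  When n = 4k+2 or 4k+3 the
   number C(n,2) of pairs is odd, so there is no such F at all. *)

Lemma subset_card_eq (T : finType) (A B : {set T}) :
  A \subset B -> #|B| <= #|A| -> A = B.
Proof. by move=> AB BA; apply/eqP; rewrite eqEcard AB BA. Qed.

Lemma balanced_cut_bound n b c : b + c = n -> b.*2 <= n ->
  n * n.-1 <= 4 * (b * c) -> (n - b.*2) ^ 2 <= n.
Proof. by move=> *; nia. Qed.

Lemma set2_injr (T : finType) (v : T) : injective (fun u => [set v; u]).
Proof.
move=> u u' /= E; have: u \in [set v; u'] by rewrite -E set22.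
rewrite !inE => /orP[/eqP uv|/eqP //]; subst u.
have: u' \in [set v; v] by rewrite E set22.
by rewrite !inE orbb => /eqP ->.
Qed.

Definition nbhd (T : finType) (e : rel T) (v : T) : {set T} := [set u | e v u].

Lemma handshake (T : finType) (Q : {set {set T}}) :
  {in Q, forall A : {set T}, #|A| = 2} ->
  \sum_v #|[set u | (v != u) && ([set v; u] \in Q)]| = #|Q|.*2.
Proof.
move=> Q2; transitivity (\sum_(A in Q) \sum_(v in A) 1); last first.
  rewrite -muln2 -sum_nat_const; apply: eq_bigr => A /Q2 <-.
  by rewrite sum1_card.
rewrite (exchange_big_dep predT) //=; apply: eq_bigr => v _.
rewrite sum1dep_card -(card_imset _ (@set2_injr _ v)); apply: eq_card => A.
rewrite !inE; apply/imsetP/andP => [[u] | [AQ vA]].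
  by rewrite inE => /andP[vu uQ] ->; rewrite uQ set21.
have /eqP/cards2P[x [y [xy AE]]] := Q2 A AQ.
move: vA AQ; rewrite AE !inE => /orP[] /eqP-> AQ.
  by exists y; rewrite // inE xy.
by exists x; rewrite 1?setUC // inE eq_sym xy setUC.
Qed.

Section TriangleFreeGraph.
Variables (T : finType) (e : rel T).
Hypotheses (e_sym : symmetric e) (e_irr : irreflexive e).
Hypothesis e_triangle_free : forall x y z, e x y -> e y z -> e x z -> False.
Local Notation N := (nbhd e).
Local Notation n := #|T|.

Lemma sum_nbhd_degrees :
  \sum_v \sum_(u in N v) (#|N v| + #|N u|) = 2 * \sum_v #|N v| * #|N v|.
Proof.
rewrite (eq_bigr (fun v => #|N v| * #|N v| + \sum_(u in N v) #|N u|)); last first.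
  by move=> v _; rewrite big_split /= sum_nat_const.
rewrite big_split /= mul2n -addnn; congr (_ + _).
rewrite (exchange_big_dep predT) //=; apply: eq_bigr => u _.
rewrite sum_nat_cond_const; congr (_ * _).
by apply: eq_card => v; rewrite !inE e_sym.
Qed.

(* Summing [d u + d v <= n - 1] over the edges gives [sum d^2 <= (n-1)/2 sum d];
   as [sum d = n (n-1) / 2], this is the equality case of Cauchy-Schwarz. *)
Lemma regular_of_light_edges :
  \sum_v #|N v| = 'C(n, 2) -> (forall u v, e u v -> #|N u| + #|N v| < n) ->
  forall v, (#|N v|).*2 = n.-1.
Proof.
move=> sum_deg light.
have bd : 2 * \sum_v #|N v| * #|N v| <= n.-1 * 'C(n, 2).
  rewrite -sum_nbhd_degrees -sum_deg big_distrr /=; apply: leq_sum => v _.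
  rewrite mulnC -sum_nat_const; apply: leq_sum => u; rewrite inE => vu.
  have n0 : 0 < n by apply/card_gt0P; exists u.
  by rewrite -ltnS prednK // light.
have C2 : 'C(n, 2).*2 = n * n.-1.
  by have := mul_bin_diag n 1; rewrite bin1 -mul2n => ->.
have Cauchy := leqif_sum (P := predT) (fun v _ => nat_Cauchy (#|N v|).*2 n.-1).
suff /forallP reg : [forall v, (#|N v|).*2 == n.-1] by move=> v; apply/eqP.
rewrite -Cauchy.2 eqn_leq Cauchy.1 /=.
have -> : \sum_v ((#|N v|).*2 ^ 2 + n.-1 ^ 2) =
          4 * \sum_v #|N v| * #|N v| + n * n.-1 ^ 2.
  rewrite big_split /= sum_nat_const big_distrr /=; congr (_ + _).
  by apply: eq_bigr => w _; rewrite -mul2n; nia.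
have -> : \sum_v 2 * ((#|N v|).*2 * n.-1) = 4 * n.-1 * \sum_v #|N v|.
  by rewrite big_distrr /=; apply: eq_bigr => w _; rewrite -mul2n; nia.
by rewrite sum_deg; move: bd C2; rewrite -mul2n; nia.
Qed.

Lemma sum_card_nbhd_cut (X : {set T}) :
  (forall i j, e i j -> (i \in X) != (j \in X)) ->
  \sum_v #|N v| <= 2 * (#|X| * #|~: X|).
Proof.
move=> cutX; rewrite mul2n -addnn {2}mulnC (bigID (mem X)) /=.
have -> : \sum_(v | v \notin X) #|N v| = \sum_(v in ~: X) #|N v|.
  by apply: eq_bigl => v; rewrite inE.
rewrite -!sum_nat_const; apply: leq_add; apply: leq_sum => v vX;
  apply/subset_leq_card/subsetP => u; rewrite inE => /cutX.
  by rewrite vX inE; case: (u \in X).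
by move: vX; rewrite inE => /negPf ->; case: (u \in X).
Qed.

Lemma cut_smaller_side (X : {set T}) :
  (forall i j, e i j -> (i \in X) != (j \in X)) ->
  exists2 B : {set T}, #|B|.*2 <= n & forall i j, e i j -> (i \in B) != (j \in B).
Proof.
move=> cutX; have [le|lt] := leqP (#|X|.*2) n; first by exists X.
exists (~: X) => [|i j /cutX]; first by have := cardsC X; lia.
by rewrite !inE; case: (_ \in X); case: (_ \in X).
Qed.

Lemma nbhd_disjoint u v : e u v -> [disjoint N u & N v].
Proof.
move=> uv; apply/pred0P => x; rewrite /= !inE.
by apply/negP => /andP[ux vx]; apply: (e_triangle_free ux _ uv); rewrite e_sym.
Qed.

Lemma heavy_edge_cut u v : e u v -> n <= #|N u| + #|N v| ->
  forall i j, e i j -> (i \in N v) != (j \in N v).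
Proof.
move=> uv heavy.
have cover x : (x \in N u) || (x \in N v).
  suff UT : N u :|: N v = setT by rewrite -in_setU UT inE.
  apply/eqP; rewrite eqEcard subsetT cardsT cardsU.
  by rewrite (disjoint_setI0 (nbhd_disjoint uv)) cards0 subn0.
move=> i j ij; apply/negP => /eqP same.
have tri w : i \in N w -> j \in N w -> False.
  by rewrite !inE => wi wj; apply: (e_triangle_free wi ij wj).
case/orP: (cover i) => [iu|iv]; last by apply: (tri v iv); rewrite -same.
have /negPf iv : i \notin N v.
  by apply/negP => iv; move/pred0P/(_ i): (nbhd_disjoint uv); rewrite /= iu iv.
by apply: (tri u iu); move: (cover j); rewrite -same iv orbF.
Qed.

Lemma common_nbr_card x a b : e x a -> e x b ->
  #|N x| + #|N a| + #|N b| <= n + #|N a :&: N b|.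
Proof.
move=> xa xb.
have disj : [disjoint N x & N a :|: N b].
  apply/pred0P => y; rewrite /= !inE; apply/negP => /andP[xy /orP[ay|by_]].
    exact: (e_triangle_free xa ay xy).
  exact: (e_triangle_free xb by_ xy).
have := cardsU (N x) (N a :|: N b); rewrite (disjoint_setI0 disj) cards0 subn0.
have := cardsUI (N a) (N b); have := subset_leq_card (subsetT (N x :|: (N a :|: N b))).
by rewrite cardsT; lia.
Qed.

(* For an edge [uv], [N u] and [N v] are disjoint [d]-sets, so exactly one vertex
   [z] lies outside both; [N z] is split between them, and each nonempty part is
   large by [common_nbr_card]. *)
Lemma triangle_free_regular_odd d :
  n = d.*2.+1 -> (forall v, #|N v| = d) -> d <= 2.
Proof.
move=> nd reg; rewrite leqNgt; apply/negP => d2.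
have /card_gt0P[v _] : 0 < n by rewrite nd.
have /card_gt0P[u] : 0 < #|N v| by rewrite reg; lia.
rewrite inE => vu; have uv : e u v by rewrite e_sym.
have cardUV : #|N u :|: N v| = d.*2.
  by rewrite cardsU (disjoint_setI0 (nbhd_disjoint uv)) cards0 subn0 !reg addnn.
have /subsetPn[z _] : ~~ (setT \subset N u :|: N v).
  by apply/negP => /subset_leq_card; rewrite cardsT cardUV nd ltnn.
rewrite inE negb_or => /andP[zu zv].
have Nz_sub : N z \subset N u :|: N v.
  have UT : z |: (N u :|: N v) = setT.
    apply/eqP; rewrite eqEcard subsetT cardsT cardsU1 cardUV nd.
    by rewrite inE negb_or zu zv /= add1n ltnSn.
  apply/subsetP => y zy; have : y \in z |: (N u :|: N v) by rewrite UT inE.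
  by rewrite in_setU1 => /orP[/eqP yz|//]; move: zy; rewrite yz inE e_irr.
have split_z : #|N z :&: N u| + #|N z :&: N v| = d.
  rewrite -(reg z) -(cardsID (N u) (N z)); congr (_ + _); apply: eq_card => y.
  rewrite !inE; case zy: (e z y); rewrite ?andbF //=.
  have /pred0P/(_ y) /= := nbhd_disjoint uv.
  have := subsetP Nz_sub y; rewrite !inE zy => /(_ isT).
  by case: (e u y); case: (e v y).
have inter w : 0 < #|N z :&: N w| -> d.-1 <= #|N z :&: N w|.
  case/card_gt0P => x; rewrite !inE => /andP[zx wx].
  have := @common_nbr_card x z w; rewrite !reg (e_sym x) zx (e_sym x) wx nd.
  by move=> /(_ isT isT); lia.
have full w w' : e w w' -> #|N z :&: N w| = d -> z \in N w'.
  move=> ww' cd; have E : N z :&: N w = N w.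
    by apply: subset_card_eq; rewrite ?subsetIr // cd reg.
  have : w' \in N z :&: N w by rewrite E inE.
  by rewrite !inE e_sym => /andP[].
have [c0|cu] := posnP #|N z :&: N u|.
  by move: zu; rewrite (full v u vu) //; lia.
have [c0|cv] := posnP #|N z :&: N v|.
  by move: zv; rewrite (full u v uv) //; lia.
by move: (inter u cu) (inter v cv); lia.
Qed.

End TriangleFreeGraph.

Section FiveCycle.
Variable adj : rel 'I_5.
Hypotheses (adj_sym : symmetric adj) (adj_irr : irreflexive adj).
Hypothesis adj_deg2 : forall v, #|nbhd adj v| = 2.
Hypothesis adj_triple : forall x y z, x != y -> y != z -> x != z ->
  [|| adj x y, adj y z | adj x z].

Lemma adj_neq x y : adj x y -> x != y.
Proof. by apply: contraTneq => ->; rewrite adj_irr. Qed.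

Lemma adj_other_nbr v x : adj v x -> exists2 y, adj v y & y != x.
Proof.
move=> vx; have /subsetPn[y] : ~~ (nbhd adj v \subset [set x]).
  by apply/negP => /subset_leq_card; rewrite adj_deg2 cards1.
by rewrite !inE => vy yx; exists y.
Qed.

(* With [c], [e] the two non-neighbours of [o], the cycle is [o y c e y']. *)
Lemma adj_five_cycle : exists o y c e y' : 'I_5,
  uniq [:: o; y; c; e; y'] /\ path adj o [:: y; c; e; y'; o].
Proof.
pose o : 'I_5 := ord0.
have [c [e [ce nonNo]]] : exists c e, c != e /\ ~: (o |: nbhd adj o) = [set c; e].
  apply/cards2P; have := cardsC (o |: nbhd adj o).
  by rewrite cardsU1 adj_deg2 inE adj_irr card_ord => /eqP; rewrite eqn_add2l.
have [[co oc] [eo oe]] : (c != o /\ ~~ adj o c) /\ (e != o /\ ~~ adj o e).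
  have : [set c; e] \subset ~: (o |: nbhd adj o) by rewrite nonNo.
  by rewrite subUset !sub1set !inE !negb_or => /andP[/andP[-> ->] /andP[-> ->]].
have adj_o z : z != o -> z != c -> z != e -> adj o z.
  move=> zo zc ze; apply/negPn/negP => noz.
  have : z \in ~: (o |: nbhd adj o) by rewrite !inE negb_or zo.
  by rewrite nonNo !inE (negbTE zc) (negbTE ze).
have ace : adj c e.
  have := @adj_triple o c e; rewrite !(eq_sym o) co ce eo => /(_ isT isT isT).
  by rewrite (negbTE oc) (negbTE oe) orbF.
have [y cy ye] := adj_other_nbr ace.
have yo : y != o by apply: contraTneq cy => ->; rewrite adj_sym.
have yc : y != c by rewrite eq_sym adj_neq.
have oy : adj o y by apply: adj_o.
have [y' ey' y'c] : exists2 y', adj e y' & y' != c by apply: adj_other_nbr; rewrite adj_sym.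
have y'o : y' != o by apply: contraTneq ey' => ->; rewrite adj_sym.
have y'e : y' != e by rewrite eq_sym adj_neq.
have oy' : adj o y' by apply: adj_o.
have yy' : y != y'.
  apply/eqP => E; subst y'.
  have : [set o; c; e] \subset nbhd adj y.
    by rewrite !subUset !sub1set !inE adj_sym oy adj_sym cy adj_sym ey'.
  move/subset_leq_card; rewrite adj_deg2 -setUA cardsU1 cards2 ce !inE negb_or.
  by rewrite !(eq_sym o) co eo.
exists o, y, c, e, y'; split; last by rewrite /= oy adj_sym cy ace ey' adj_sym oy'.
by rewrite /= !inE !negb_or !(eq_sym o) yo co eo y'o yc ye yy' ce (eq_sym c) y'c
  (eq_sym e) y'e.
Qed.

Lemma cycle5_of_2regular : exists p : {perm 'I_5}, forall i, adj (p i) (p (ordS i)).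
Proof.
have [o [y [c [e [y' [s_uniq]]]]]] := adj_five_cycle.
rewrite /= !andbT => /and5P[oy yc ce ey' y'o].
have s_inj : injective (fun i : 'I_5 => nth o [:: o; y; c; e; y'] i).
  by move=> i j /eqP; rewrite nth_uniq // => /eqP; apply: val_inj.
exists (perm s_inj) => i; rewrite !permE.
by case: i => [[|[|[|[|[|?]]]]] ?].
Qed.
End FiveCycle.

Section MinimalGenerators.
Variables (n : nat) (F : {set {set 'I_n}}).

Lemma mingens_below A : A \in F -> exists2 g, g \in mingens F & g \subset A.
Proof.
have [m] := ubnP #|A|; elim: m A => // m IH A ltAm AF.
case: (boolP (A \in mingens F)) => [Am|]; first by exists A.
rewrite inE AF /= => /forall_inPn[B BF]; rewrite negb_imply => /andP[BA nBA].
have BpA : B \proper A by rewrite properEneq nBA BA.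
have [g gm gB] := IH B (leq_trans (proper_card BpA) (ltnSE ltAm)) BF.
by exists g => //; apply: subset_trans gB BA.
Qed.

Lemma gen_ideal_mingens : sqf_ideal F -> gen_ideal (mingens F) = F.
Proof.
move=> sqF; apply/setP => A; rewrite inE; apply/exists_inP/idP => [[g] | /mingens_below].
  by rewrite inE => /andP[gF _] gA; apply: sqF gF gA.
by case=> g; exists g.
Qed.

End MinimalGenerators.

Definition edge n (F : {set {set 'I_n}}) : rel 'I_n :=
  fun i j => (i != j) && ([set i; j] \in F).

Definition nonedge n (F : {set {set 'I_n}}) : rel 'I_n :=
  fun i j => (i != j) && ([set i; j] \notin F).

Section NonedgeGraph.
Variables (n : nat) (F : {set {set 'I_n}}).

Lemma nonedge_sym : symmetric (nonedge F).
Proof. by move=> i j; rewrite /nonedge eq_sym setUC. Qed.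

Lemma nonedge_irr : irreflexive (nonedge F).
Proof. by move=> i; rewrite /nonedge eqxx. Qed.

Lemma card_nbhd_edge_nonedge v :
  #|nbhd (edge F) v| + #|nbhd (nonedge F) v| = n.-1.
Proof.
transitivity #|[set~ v]|; last by rewrite cardsC1 card_ord.
rewrite -(cardsID [set u | [set v; u] \in F] [set~ v]).
by congr (_ + _); apply: eq_card => u; rewrite !inE eq_sym // andbC.
Qed.

Hypothesis VF : Vn2 F.
Let mingens2 : forall g, g \in mingens F -> #|g| = 2 := proj2 VF.

Lemma Vn2_mingensE : mingens F = [set A in F | #|A| == 2].
Proof.
apply/setP => A; rewrite [in RHS]inE; apply/idP/andP => [Am | [AF /eqP A2]].
  by split; [move: Am; rewrite inE => /andP[] | rewrite mingens2].
have [g gm gA] := mingens_below AF.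
by rewrite -(subset_card_eq gA) // A2 mingens2.
Qed.

Lemma Vn2_mem3 (A : {set 'I_n}) : #|A| = 3 -> A \in F.
Proof.
move=> A3; apply/negPn/negP => AnF.
have := proj2 (proj1 VF) 2; rewrite /fvec.
have -> : [set B in facet_complex F | #|B| == 3] = set0.
  apply/setP => B; rewrite !inE; apply/negP => /andP[/exists_inP[g /mingens2 g2 Bg] /eqP B3].
  by have := subset_leq_card Bg; rewrite B3 g2.
move/esym/eqP; rewrite cards0 cards_eq0 => /eqP/setP/(_ A).
by rewrite !inE AnF A3.
Qed.

Lemma Vn2_card_nonedges :
  #|[set A : {set 'I_n} | (A \notin F) && (#|A| == 2)]| = #|mingens F|.
Proof.
have := proj2 (proj1 VF) 1; rewrite /fvec => facet_eq.
transitivity #|[set A in facet_complex F | #|A| == 2]|.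
  by rewrite facet_eq; apply: eq_card => A; rewrite !inE.
apply: eq_card => A; rewrite ![in LHS]inE.
apply/andP/idP => [[/exists_inP[g gm Ag] /eqP A2] | Am].
  by rewrite (subset_card_eq Ag) // A2 mingens2.
by rewrite mingens2 //; split=> //; apply/exists_inP; exists A.
Qed.

Lemma Vn2_card_mingens : 'C(n, 2) = (#|mingens F|).*2.
Proof.
rewrite -{1}(card_ord n) -card_draws -(cardsID F [set A : {set 'I_n} | #|A| == 2]).
rewrite -addnn; congr (_ + _).
  by rewrite Vn2_mingensE; apply: eq_card => A; rewrite !inE andbC.
by rewrite -Vn2_card_nonedges; apply: eq_card => A; rewrite !inE andbC.
Qed.

Lemma Vn2_dvd4 : 4 %| n * n.-1.
Proof. by have := mul_bin_diag n 1; rewrite bin1 Vn2_card_mingens => ->; lia. Qed.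

Lemma nonedge_triangle_free x y z :
  nonedge F x y -> nonedge F y z -> nonedge F x z -> False.
Proof.
move=> /andP[xy nxy] /andP[yz nyz] /andP[xz nxz].
have /mingens_below[g gm] : [set x; y; z] \in F.
  by apply: Vn2_mem3; rewrite -setUA cardsU1 cards2 yz !inE negb_or xy xz.
have /eqP/cards2P[a [b [ab gE]]] := mingens2 gm.
move: gm; rewrite gE inE subUset !sub1set => /andP[abF _] /andP.
have [nyx nzy nzx] : [/\ [set y; x] \notin F, [set z; y] \notin F & [set z; x] \notin F].
  by split; rewrite setUC.
rewrite !inE => -[] /orP[/orP[]|] /eqP ea /orP[/orP[]|] /eqP eb;
  move: ab abF; rewrite ea eb ?eqxx // => _ abF;
  by move: nxy nyx nyz nzy nxz nzx; rewrite abF.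
Qed.

Lemma sum_card_nonedge : \sum_v #|nbhd (nonedge F) v| = 'C(n, 2).
Proof.
rewrite Vn2_card_mingens -Vn2_card_nonedges -handshake => [|A]; last first.
  by rewrite inE => /andP[_ /eqP].
apply: eq_bigr => v _; apply: eq_card => u; rewrite !inE cards2.
by rewrite /nonedge; case: (v != u); rewrite ?andbT.
Qed.

Lemma edge_triple x y z : x != y -> y != z -> x != z ->
  [|| edge F x y, edge F y z | edge F x z].
Proof.
move=> xy yz xz; apply/negPn/negP; rewrite !negb_or => /and3P[nxy nyz nxz].
apply: (@nonedge_triangle_free x y z); rewrite /nonedge ?xy ?yz ?xz.
- by move: nxy; rewrite /edge xy.
- by move: nyz; rewrite /edge yz.
- by move: nxz; rewrite /edge xz.
Qed.

Lemma Vn2_WB_subset (B : {set 'I_n}) :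
  (forall i j, nonedge F i j -> (i \in B) != (j \in B)) -> WB B \subset mingens F.
Proof.
move=> cutB; apply/subsetP => A; rewrite inE.
case/existsP=> i /existsP[j /andP[/andP[ij side] /eqP ->]].
rewrite Vn2_mingensE inE cards2 ij andbT; apply/negPn/negP => ijF.
have := cutB i j; rewrite /nonedge ij ijF => /(_ isT).
by case/orP: side => /andP[]; [move=> -> -> | move=> /negPf-> /negPf->].
Qed.

Lemma Vn2_cut_or_regular :
  (exists B : {set 'I_n}, [/\ Wl #|B| F, #|B|.*2 <= n & (n - #|B|.*2) ^ 2 <= n])
  \/ forall v, (#|nbhd (nonedge F) v|).*2 = n.-1.
Proof.
have [e_sym e_tf] := (nonedge_sym, nonedge_triangle_free).
pose heavy (uv : 'I_n * 'I_n) := nonedge F uv.1 uv.2 &&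
  (n <= #|nbhd (nonedge F) uv.1| + #|nbhd (nonedge F) uv.2|).
case: (pickP heavy) => [[u v] /andP[/= uv uv_heavy] | light]; last first.
  right=> v; rewrite -[in RHS](card_ord n).
  apply: (regular_of_light_edges e_sym) => [|x y xy]; first by rewrite card_ord sum_card_nonedge.
  by rewrite card_ord ltnNge; apply/negbT; have := light (x, y); rewrite /heavy /= xy /= => ->.
have := heavy_edge_cut e_sym e_tf uv; rewrite card_ord => /(_ uv_heavy) cutX.
have [B Bn cutB] := cut_smaller_side cutX; rewrite card_ord in Bn.
have := cardsC B; rewrite card_ord => cB.
have [[x xB] [y yB]] : (exists b, b \in B) /\ (exists c, c \notin B).
  by move: (cutB u v uv); case: (boolP (u \in B)) => uB; case: (boolP (v \in B)) => vB //= _;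
    split; [exists u | exists v | exists v | exists u].
have Bpos : 0 < #|B| by apply/card_gt0P; exists x.
have Cpos : 0 < #|~: B| by apply/card_gt0P; exists y; rewrite inE.
have := sum_card_nbhd_cut cutB; rewrite sum_card_nonedge => cut.
have := mul_bin_diag n 1; rewrite bin1 => C2.
left; exists B; split => //; last first.
  apply: balanced_cut_bound cB Bn _; move: cut C2.
  (* [set] merges differently elaborated copies of the same cardinal for [lia] *)
  by set C := 'C(n, 2); set b := #|B|; set c := #|~: B|; lia.
split=> //; exists B; split => //; last exact: Vn2_WB_subset.
by rewrite Bpos /=; move: cB Cpos; set b := #|B|; set c := #|~: B|; lia.
Qed.

Lemma Vn2_regular_le5 : (forall v, (#|nbhd (nonedge F) v|).*2 = n.-1) -> n <= 5.
Proof.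
move=> reg; have [->|n0] := posnP n; first by [].
pose d := #|nbhd (nonedge F) (Ordinal n0)|.
have := reg (Ordinal n0); rewrite -/d => reg0.
suff : d <= 2 by lia.
apply: (triangle_free_regular_odd nonedge_sym nonedge_irr nonedge_triangle_free).
  by rewrite card_ord; lia.
by move=> v; apply: double_inj; rewrite reg.
Qed.

End NonedgeGraph.

Section GeneratedIdeal.
Variables (n : nat) (E : {set {set 'I_n}}).
Hypothesis E2 : {in E, forall g : {set 'I_n}, #|g| = 2}.

Lemma mingens_gen_ideal : mingens (gen_ideal E) = E.
Proof.
apply/setP => A; rewrite inE [A \in gen_ideal E]inE; apply/andP/idP.
  case=> /exists_inP[g gE gA] /forall_inP minA.
  have : g \in gen_ideal E by rewrite inE; apply/exists_inP; exists g.
  by move/minA; rewrite gA => /eqP <-.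
move=> AE; split; first by apply/exists_inP; exists A.
apply/forall_inP => B; rewrite inE => /exists_inP[g gE gB]; apply/implyP => BA.
have gA : g = A by apply: subset_card_eq; [apply: subset_trans gB BA | rewrite !E2].
by rewrite eqEsubset BA -gA gB.
Qed.

Lemma Vn2_gen_ideal :
  (forall x : 'I_n, exists2 g, g \in E & x \in g) ->
  (forall A : {set 'I_n}, 3 <= #|A| -> exists2 g, g \in E & g \subset A) ->
  'C(n, 2) = #|E|.*2 -> Vn2 (gen_ideal E).
Proof.
move=> Ecov E3 Ecard; split; last by rewrite mingens_gen_ideal.
split=> [A B | ].
  rewrite !inE => /exists_inP[g gE gA] AB; apply/exists_inP; exists g => //.
  exact: subset_trans gA AB.
move=> [|[|i]]; rewrite /fvec.
- apply: eq_card => A; rewrite !inE mingens_gen_ideal.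
  case: (boolP (#|A| == 1)) => [/cards1P[x ->] | _]; rewrite ?andbF // !andbT.
  have [g gE xg] := Ecov x.
  rewrite (_ : [exists g in E, [set x] \subset g]); last first.
    by apply/exists_inP; exists g; rewrite ?sub1set.
  by apply/esym/negP => /exists_inP[g' /E2 g2 /subset_leq_card]; rewrite g2 cards1.
- have -> : [set A in facet_complex (gen_ideal E) | #|A| == 2] = E.
    apply/setP => A; rewrite !inE mingens_gen_ideal.
    apply/andP/idP => [[/exists_inP[g gE Ag] /eqP A2] | AE].
      by rewrite (subset_card_eq Ag) // A2 E2.
    by rewrite E2 //; split=> //; apply/exists_inP; exists A.
  apply/eqP; rewrite -(eqn_add2l #|E|) addnn -Ecard -{1}(card_ord n) -card_draws.
  rewrite -(cardsID (gen_ideal E) [set A : {set 'I_n} | #|A| == 2]).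
  apply/eqP; congr (_ + _); apply: eq_card => A; rewrite !inE //.
  apply/andP/idP => [[/eqP A2 /exists_inP[g gE gA]] | AE].
    by rewrite -(subset_card_eq gA) // A2 E2.
  by split; [rewrite E2 | apply/exists_inP; exists A].
- apply: eq_card => A; rewrite !inE mingens_gen_ideal.
  case: (boolP (#|A| == i.+3)) => [/eqP Ai | _]; rewrite ?andbF // !andbT.
  have [g gE gA] : exists2 g, g \in E & g \subset A by apply: E3; rewrite Ai.
  rewrite (_ : [exists g in E, g \subset A]); last by apply/exists_inP; exists g.
  by apply/negbTE/exists_inP => -[g' /E2 g2 /subset_leq_card]; rewrite g2 Ai.
Qed.

End GeneratedIdeal.

Definition cycle5 (p : {perm 'I_5}) : {set {set 'I_5}} :=
  [set [set p i; p (ordS i)] | i : 'I_5].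

Lemma ordS5_neq (i : 'I_5) : ordS i != i.
Proof. by case: i => [[|[|[|[|[|?]]]]] ?]. Qed.

Lemma ordSS5_neq (i : 'I_5) : ordS (ordS i) != i.
Proof. by case: i => [[|[|[|[|[|?]]]]] ?]. Qed.

Lemma card_cycle5 p : #|cycle5 p| = 5.
Proof.
rewrite card_imset ?card_ord // => i j /= eq_ij.
have : p i \in [set p j; p (ordS j)] by rewrite -eq_ij set21.
rewrite !inE !(inj_eq perm_inj) => /orP[/eqP // | /eqP ij].
have : p (ordS i) \in [set p j; p (ordS j)] by rewrite -eq_ij set22.
rewrite !inE !(inj_eq perm_inj) ij (negbTE (ordSS5_neq j)) /=.
by move=> /eqP/ordS_inj.
Qed.

Lemma C5_Vn2 (F : {set {set 'I_5}}) : C5 F -> Vn2 F.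
Proof.
case=> p ->; apply: Vn2_gen_ideal => [g /imsetP[i _ ->] | x | A A3 | ].
- by rewrite cards2 (inj_eq perm_inj) eq_sym ordS5_neq.
- exists [set p ((p^-1)%g x); p (ordS ((p^-1)%g x))]; last by rewrite permKV set21.
  by apply/imsetP; exists ((p^-1)%g x).
- (* an independent [A] would be injected into [~: A] by the rotation of the cycle *)
  apply/exists_inP; apply: contraT => /negP indepA; exfalso.
  pose succ x := p (ordS ((p^-1)%g x)).
  have succ_inj : injective succ by move=> x y /perm_inj /ordS_inj /perm_inj.
  have : succ @: A \subset ~: A.
    apply/subsetP => y /imsetP[x xA ->]; rewrite inE; apply/negP => sxA.
    apply: indepA; apply/exists_inP; exists [set x; succ x].
      by apply/imsetP; exists ((p^-1)%g x); rewrite // permKV.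
    by rewrite subUset !sub1set xA.
  move/subset_leq_card; rewrite card_imset //; have := cardsC A; rewrite card_ord.
  lia.
- by rewrite card_cycle5.
Qed.

Lemma Vn2_C5 (F : {set {set 'I_5}}) :
  Vn2 F -> (forall v, #|nbhd (nonedge F) v| = 2) -> C5 F.
Proof.
move=> VF reg.
have [p cycle_edges] : exists p : {perm 'I_5}, forall i, edge F (p i) (p (ordS i)).
  apply: cycle5_of_2regular => [i j | i | v | x y z].
  - by rewrite /edge eq_sym setUC.
  - by rewrite /edge eqxx.
  - by have := @card_nbhd_edge_nonedge _ F v; rewrite reg; lia.
  - exact: edge_triple.
exists p; rewrite -(gen_ideal_mingens (proj1 (proj1 VF))); congr gen_ideal; symmetry.
apply: subset_card_eq.
  apply/subsetP => A /imsetP[i _ ->]; have /andP[ne inF] := cycle_edges i.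
  by rewrite (Vn2_mingensE VF) inE inF cards2 ne.
have := Vn2_card_mingens VF; rewrite card_cycle5 (_ : 'C(5, 2) = 10) //.
by set m := #|mingens F|; lia.
Qed.

Theorem theorem4p8 (k : nat) (hk : 0 < k) :
  [/\ (forall F : {set {set 'I_(4 * k)}},
         Vn2 F <-> exists i : nat, i * i <= k /\ Wl (2 * k - i) F),
      (k != 1 -> forall F : {set {set 'I_(4 * k + 1)}},
         Vn2 F <-> exists i : nat, (2 * i + 1) ^ 2 <= 1 + 4 * k /\ Wl (2 * k - i) F),
      (forall F : {set {set 'I_5}}, Vn2 F <-> Wl 2 F \/ C5 F),
      (forall F : {set {set 'I_(4 * k + 2)}}, ~ Vn2 F)
    & (forall F : {set {set 'I_(4 * k + 3)}}, ~ Vn2 F)].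
Proof.
have n0 : 0 < 4 * k by lia.
split.
- move=> F; split=> [VF | [i [_ []]] //].
  have [[B [WB Bn cut]] | reg] := Vn2_cut_or_regular VF.
    exists (2 * k - #|B|); rewrite subKn; last by set b := #|B|; lia.
    by split=> //; set b := #|B|; nia.
  by have := reg (Ordinal n0); lia.
- move=> k1 F; split=> [VF | [i [_ []]] //].
  have [[B [WB Bn cut]] | /(Vn2_regular_le5 VF)] := Vn2_cut_or_regular VF; last lia.
  exists (2 * k - #|B|); rewrite subKn; last by set b := #|B|; lia.
  by split=> //; set b := #|B|; nia.
- move=> F; split=> [VF | [[] // | /C5_Vn2 //]].
  have [[B [WB Bn cut]] | reg] := Vn2_cut_or_regular VF.
    left; have B2 : #|B| = 2 by set b := #|B|; nia.
    by move: WB; rewrite B2.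
  by right; apply: Vn2_C5 VF _ => v; have := reg v; lia.
- by move=> F /Vn2_dvd4; lia.
- by move=> F /Vn2_dvd4; lia.
Qed.
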